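(* Assume the Morris–Sinclair mixing bound: for every $\alpha>0$ there is a constant $C_\alpha$ such that for all $n$, $\vec a$, $b$, the chain $P_{\rm Kna}$ satisfies $\tau(1/4)\le C_\alpha n^{9/2+\alpha}$. Then for every $\alpha>0$ there is a constant $C'_\alpha$ such that, for the SRT router model and for the billiard router model corresponding to $P_{\rm Kna}$ (for any $n,\vec a,b$ and any initial configuration), $\left|\chi^{(T)}_w-\mu^{(T)}_w\right|\le C'_\alpha n^{11/2+\alpha}$ for all $w\in\Omega_{\rm Kna}$ and $T\ge0$.
   Context: Given $\vec a\in\mathbb{Z}_{>0}^n$ and $b\in\mathbb{Z}_{>0}$, $\Omega_{\rm Kna}=\{\vec x\in\{0,1\}^n:\sum_i a_ix_i\le b\}$, $\mathcal N_{\rm Kna}(\vec x)=\{\vec y\in\Omega_{\rm Kna}:\|\vec x-\vec y\|_1=1\}$, and $P_{\rm Kna}(\vec x,\vec y)=1/(2n)$ if $\vec y\in\mathcal N_{\rm Kna}(\vec x)$, $1-|\mathcal N_{\rm Kna}(\vec x)|/(2n)$ if $\vec y=\vec x$, and $0$ otherwise; it is symmetric, ergodic, with uniform stationary distribution. For a stochastic matrix $P$ on a finite set $V$ with stationary distribution $\pi$: $\mathcal N(v)=\{u:P_{v,u}>0\}$; $d_{TV}(\xi,\zeta)=\frac12\|\xi-\zeta\|_1$; $\tau(\varepsilon)=\max_v\min\{t\ge0:d_{TV}(P^t_{v,\cdot},\pi)\le\varepsilon\}$. A functional-router model consists of $\sigma_v:\mathbb{Z}_{\ge0}\to\mathcal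 N(v)$; $I_{v,u}[z,z')=|\{j\in\{z,\dots,z'-1\}:\sigma_v(j)=u\}|$; given $\chi^{(0)}\in\mathbb{Z}_{\ge0}^V$, $Z^{(t)}_{v,u}=I_{v,u}\big[\sum_{s<t}\chi^{(s)}_v,\sum_{s\le t}\chi^{(s)}_v\big)$, $\chi^{(t+1)}_u=\sum_vZ^{(t)}_{v,u}$, $\mu^{(t)}=\chi^{(0)}P^t$. SRT router: with $T_i(v)=\{u\in\mathcal N(v):I_{v,u}[0,i)-(i+1)P_{v,u}<0\}$, $\sigma_v(i)$ is some $u\in T_i(v)$ minimizing $(I_{v,u}[0,i)+1)/P_{v,u}$. Billiard router: $\sigma_v(i)$ is some $u\in\mathcal N(v)$ minimizing $(I_{v,u}[0,i)+1)/P_{v,u}$. (Known: for the SRT router $|I_{v,u}[0,z)-zP_{v,u}|<1$ for all $z>0$; for the billiard router $|I_{v,u}[z,z')-(z'-z)P_{v,u}|\le1+(|\mathcal N(v)|-2)P_{v,u}$ for $z'>z$.) *)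

From Stdlib Require Import Reals.
From mathcomp Require Import all_boot.

Set Implicit Arguments.
Unset Strict Implicit.
Unset Printing Implicit Defensive.
Local Open Scope R_scope.

Definition rsum (V : finType) (f : V -> R) : R := \big[Rplus/R0]_(x : V) f x.

Section Markov.
Variable V : finType.
Variable P : V -> V -> R.

Fixpoint Ppow (t : nat) : V -> V -> R :=
  match t with
  | O => fun v u => if v == u then R1 else R0
  | S t' => fun v u => rsum (fun w => (Ppow t' v w * P w u))
  end.

Definition dTV (xi zeta : V -> R) : R :=
  (/ 2 * rsum (fun v => Rabs (xi v - zeta v))).

(* "tau(eps) <= B", where tau(eps) = max_v min { t >= 0 : d_TV(P^t_{v,.}, pi) <= eps }.
   This is literally the unfolding: the max over v is <= B iff for every v
   the minimum (which exists iff the set is nonempty) is <= B, iff for every v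
   some t <= B belongs to the set. *)
Definition mixing_time_le (pi : V -> R) (eps B : R) : Prop :=
  forall v : V, exists t : nat, (INR t <= B) /\ (dTV (Ppow t v) pi <= eps).

Definition nbr (v u : V) : Prop := (0 < P v u).

Definition Icount (sigma : V -> nat -> V) (v u : V) (z z' : nat) : nat :=
  count (fun j => sigma v j == u) (iota z (z' - z)).

(* One step of the functional-router model; the state is the pair
   (cumulative load sum_{s<t} chi^(s), current load chi^(t)). *)
Definition router_step (sigma : V -> nat -> V)
    (st : (V -> nat) * (V -> nat)) : (V -> nat) * (V -> nat) :=
  let: (cum, cur) := st in
  (fun v => cum v + cur v,
   fun u => \sum_(v : V) Icount sigma v u (cum v) (cum v + cur v))%N.

Definition chi (sigma : V -> nat -> V) (chi0 : V -> nat) (t : nat) : V -> nat :=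
  (iter t (router_step sigma) (fun _ => 0%N, chi0)).2.

Definition mu (chi0 : V -> nat) (t : nat) (w : V) : R :=
  rsum (fun v => (INR (chi0 v) * Ppow t v w)).

Definition in_T (sigma : V -> nat -> V) (v : V) (i : nat) (u : V) : Prop :=
  nbr v u /\ (INR (Icount sigma v u 0 i) - INR (i + 1) * P v u < 0).

Definition is_SRT_router (sigma : V -> nat -> V) : Prop :=
  forall (v : V) (i : nat),
    in_T sigma v i (sigma v i) /\
    forall u, in_T sigma v i u ->
      ((INR (Icount sigma v (sigma v i) 0 i) + 1) / P v (sigma v i)
        <= (INR (Icount sigma v u 0 i) + 1) / P v u).

Definition is_billiard_router (sigma : V -> nat -> V) : Prop :=
  forall (v : V) (i : nat),
    nbr v (sigma v i) /\
    forall u, nbr v u ->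
      ((INR (Icount sigma v (sigma v i) 0 i) + 1) / P v (sigma v i)
        <= (INR (Icount sigma v u 0 i) + 1) / P v u).

End Markov.

Definition Omega (n : nat) (a : 'I_n -> nat) (b : nat) : predArgType :=
  {x : {ffun 'I_n -> bool} | (\sum_(i < n) a i * x i <= b)%N}.
Arguments Omega : clear implicits.


Definition l1dist (n : nat) (x y : {ffun 'I_n -> bool}) : nat :=
  #|[set i : 'I_n | x i != y i]|.

Definition nbr_Kna_card (n : nat) (a : 'I_n -> nat) (b : nat) (x : Omega n a b) : nat :=
  #|[set y : Omega n a b | l1dist (val x) (val y) == 1%N]|.

Definition P_Kna (n : nat) (a : 'I_n -> nat) (b : nat) (x y : Omega n a b) : R :=
  if l1dist (val x) (val y) == 1%N then (/ (2 * INR n))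
  else if x == y then (1 - INR (nbr_Kna_card x) / (2 * INR n))
  else R0.

Definition unif_Kna (n : nat) (a : 'I_n -> nat) (b : nat) (x : Omega n a b) : R :=
  (/ INR #|Omega n a b|).

(* Write e^(T) = chi^(T) - mu^(T) for the error of the router model.  Let
   Delta_0 = Id and Delta_s = P^s - P^(s-1) (s >= 1), and let H_t(x) be the
   sum over all v of the routing discrepancy I_{v,x}[0, z_v) - z_v P(v,x),
   z_v being the number of tokens sent out of v before step t.  Then
     e^(T)(w) = sum_{s<T} sum_x H_{T-s}(x) Delta_s(x, w)          (error_formula)
   and the proof is a bound on each factor:
   - since each row of discrepancies sums to 0, |sum_x H_t(x) c(x)| is at most
     2 deg ||c||_1 when discrepancies along the edges of a graph of degree at
     most deg are bounded by 1 (weighted_error_bound);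
   - for a symmetric chain whose t-step distributions are 1/4-close to a
     constant after N steps, the increments contract by 1/2 every N steps, so
     sum_s ||Delta_s(., w)||_1 <= 1 + 4N (increments_l1_sum);
   - for the SRT and billiard routers, discrepancies along edges of the
     knapsack chain lie in [-1, 1] (knapsack_discrepancy_bound).
   With deg = n and N = O(n^(9/2+alpha)) from the Morris--Sinclair bound this
   gives |e^(T)(w)| <= 2n (1 + 4N) = O(n^(11/2+alpha)).
   The file develops, in order: finite sums; powers of a symmetric stochastic
   matrix and the decay of their increments; the router dynamics and the error
   formula; the error bound for routers with discrepancies in [-1, 1]; the
   discrepancy bounds for the SRT and billiard routers; the knapsack chain;
   and finally the conversion of the mixing-time hypothesis into the bound. *)

From Stdlib Require Import Reals.
From mathcomp Require Import all_boot.
Open Scope R_scope.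

From HB Require Import structures.
From Stdlib Require Import Lra Lia.
From mathcomp Require Import zify.
Set Implicit Arguments.
Unset Strict Implicit.

HB.instance Definition _ :=
  Monoid.isComLaw.Build R R0 Rplus
    (fun x y z => esym (Rplus_assoc x y z)) Rplus_comm Rplus_0_l.

Section FiniteSums.
Variable V : finType.
Implicit Types f g : V -> R.

Lemma rsumD f g : rsum (fun x => f x + g x) = rsum f + rsum g.
Proof. by rewrite /rsum big_split. Qed.

Lemma rsumZ c f : rsum (fun x => c * f x) = c * rsum f.
Proof.
rewrite /rsum; elim/big_rec2: _ => [|i y1 y2 _ ->]; first by rewrite Rmult_0_r.
by rewrite Rmult_plus_distr_l.
Qed.

Lemma rsumN f : rsum (fun x => - f x) = - rsum f.
Proof. by rewrite /rsum; elim/big_rec2: _ => [|i y1 y2 _ ->]; lra. Qed.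

Lemma rsumB f g : rsum (fun x => f x - g x) = rsum f - rsum g.
Proof. by rewrite /Rminus -rsumN -rsumD. Qed.

Lemma rsum_ext f g : (forall x, f x = g x) -> rsum f = rsum g.
Proof. by move=> H; apply: eq_bigr => x _. Qed.

Lemma rsum0 : rsum (fun _ : V => 0) = 0.
Proof. by rewrite /rsum big1. Qed.

Lemma rsum_le f g : (forall x, f x <= g x) -> rsum f <= rsum g.
Proof.
move=> H; rewrite /rsum; elim/big_rec2: _ => [|i y1 y2 _ Hy]; first lra.
exact: Rplus_le_compat.
Qed.

Lemma rsum_ge0 f : (forall x, 0 <= f x) -> 0 <= rsum f.
Proof. by move=> H; rewrite -rsum0; apply: rsum_le. Qed.

Lemma rsum_abs f : Rabs (rsum f) <= rsum (fun x => Rabs (f x)).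
Proof.
rewrite /rsum; elim/big_rec2: _ => [|i y1 y2 _ Hy]; first by rewrite Rabs_R0; lra.
by apply: Rle_trans (Rabs_triang _ _) _; lra.
Qed.

Lemma rsum_ge_term f a : (forall x, 0 <= f x) -> f a <= rsum f.
Proof.
move=> H; rewrite /rsum (bigD1 a) //=.
have : 0 <= \big[Rplus/R0]_(i | i != a) f i.
  by elim/big_rec: _ => [|i y _ Hy]; [lra | have := H i; lra].
lra.
Qed.

Lemma rsum_exchange (f : V -> V -> R) :
  rsum (fun x => rsum (fun y => f x y)) = rsum (fun y => rsum (fun x => f x y)).
Proof. by rewrite /rsum exchange_big. Qed.

Lemma rsum_delta (a : V) (c : V -> R) :
  rsum (fun x => if x == a then c x else 0) = c a.
Proof. by rewrite /rsum (bigD1 a) //= eqxx big1 ?Rplus_0_r // => i /negbTE ->. Qed.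

Lemma rsum_delta_r (a : V) (c : V -> R) :
  rsum (fun x => if a == x then c x else 0) = c a.
Proof. by rewrite -(rsum_delta a c); apply: rsum_ext => x; rewrite eq_sym. Qed.

Lemma rsum_INR (F : V -> nat) : INR (\sum_(x : V) F x)%N = rsum (fun x => INR (F x)).
Proof. by rewrite /rsum; elim/big_rec2: _ => [//|i y1 y2 _ <-]; rewrite plus_INR. Qed.

Lemma rsum_indicator (p : pred V) (c : R) :
  rsum (fun x => if p x then c else 0) = INR #|p| * c.
Proof.
rewrite /rsum -big_mkcond big_const /=.
by elim: #|p| => [|k IH] /=; [lra | rewrite IH; case: k {IH} => /= *; lra].
Qed.

End FiniteSums.

Fixpoint sumR (f : nat -> R) (T : nat) : R :=
  match T with O => 0 | S T => sumR f T + f T end.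

Lemma sumR_ext f g T : (forall s, (s < T)%N -> f s = g s) -> sumR f T = sumR g T.
Proof. elim: T => [//|T IH] H /=; rewrite IH ?H // => s Hs; apply: H; exact: ltnW. Qed.

Lemma sumR_le f g T : (forall s, (s < T)%N -> f s <= g s) -> sumR f T <= sumR g T.
Proof.
elim: T => [|T IH] H /=; first lra.
by apply: Rplus_le_compat; [apply: IH => s Hs; apply: H; exact: ltnW | exact: H].
Qed.

Lemma sumR_ge0 f T : (forall s, (s < T)%N -> 0 <= f s) -> 0 <= sumR f T.
Proof. by move=> H; apply: Rle_trans (sumR_le (f := fun _ => 0) H); elim: T {H} => /= *; lra. Qed.

Lemma sumR_const_le f T c : (forall s, (s < T)%N -> f s <= c) -> sumR f T <= INR T * c.
Proof.
elim: T => [|T IH] H; first (simpl; lra).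
have := IH (fun s Hs => H s (ltnW Hs)); have := H T (ltnSn T).
rewrite S_INR /=; lra.
Qed.

Lemma sumR_abs f T : Rabs (sumR f T) <= sumR (fun s => Rabs (f s)) T.
Proof.
elim: T => [|T IH] /=; first by rewrite Rabs_R0; lra.
by apply: Rle_trans (Rabs_triang _ _) _; lra.
Qed.

Lemma sumR_shift f T : sumR f T.+1 = f 0%N + sumR (fun s => f s.+1) T.
Proof. by elim: T => [|T IH] /=; [|rewrite /= in IH; rewrite IH]; lra. Qed.

Lemma sumR_cat f a b : sumR f (a + b) = sumR f a + sumR (fun s => f (a + s)%N) b.
Proof. by elim: b => [|b IH]; [rewrite addn0 /= | rewrite addnS /= IH]; lra. Qed.

Lemma sumR_add f g T : sumR (fun s => f s + g s) T = sumR f T + sumR g T.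
Proof. by elim: T => [|T IH] /=; [|rewrite IH]; ring. Qed.

Lemma sumR_mulr f T c : sumR f T * c = sumR (fun s => f s * c) T.
Proof. by elim: T => [|T IH] /=; [|rewrite -IH]; ring. Qed.

Lemma rsum_sumR (V : finType) (f : V -> nat -> R) T :
  rsum (fun u => sumR (f u) T) = sumR (fun s => rsum (fun u => f u s)) T.
Proof. by elim: T => [|T IH] /=; [exact: rsum0 | rewrite rsumD IH]. Qed.

Lemma sumR_first (a : R) T :
  sumR (fun s => if s is O then a else 0) T = if T is O then 0 else a.
Proof.
case: T => [//|T]; rewrite sumR_shift (_ : sumR _ T = 0); first lra.
by elim: T => [//|T IH] /=; rewrite IH; lra.
Qed.

Section MarkovPowers.
Variable V : finType.
Variable P : V -> V -> R.
Hypothesis P_ge0 : forall v u, 0 <= P v u.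
Hypothesis P_row : forall v, rsum (P v) = 1.
Hypothesis P_sym : forall v u, P v u = P u v.

Lemma Ppow_CK a b x u :
  Ppow P (a + b) x u = rsum (fun y => Ppow P a x y * Ppow P b y u).
Proof.
elim: b u => [|b IH] u.
  rewrite addn0 /= -(rsum_delta u (Ppow P a x)); apply: rsum_ext => y.
  by case: (y == u); ring.
rewrite addnS /=.
transitivity (rsum (fun w => rsum (fun y => Ppow P a x y * Ppow P b y w * P w u))).
  by apply: rsum_ext => w; rewrite IH Rmult_comm -rsumZ; apply: rsum_ext => y; ring.
rewrite rsum_exchange; apply: rsum_ext => y.
by rewrite -rsumZ; apply: rsum_ext => w; ring.
Qed.

Lemma Ppow_ge0 t x u : 0 <= Ppow P t x u.
Proof.
elim: t x u => [|t IH] x u /=; first by case: (x == u); lra.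
by apply: rsum_ge0 => w; apply: Rmult_le_pos.
Qed.

Lemma Ppow_row t x : rsum (Ppow P t x) = 1.
Proof.
elim: t x => [|t IH] x /=.
  by rewrite -(rsum_delta_r x (fun _ => 1)); apply: rsum_ext => w; case: (x == w).
rewrite rsum_exchange -(IH x); apply: rsum_ext => w.
by rewrite rsumZ P_row Rmult_1_r.
Qed.

Lemma Ppow1 x u : Ppow P 1 x u = P x u.
Proof.
rewrite /= -(rsum_delta_r x (fun w => P w u)).
by apply: rsum_ext => w; case: (x == w); ring.
Qed.

Lemma Ppow_sym t x u : Ppow P t x u = Ppow P t u x.
Proof.
elim: t x u => [|t IH] x u; first by rewrite /= eq_sym.
rewrite [Ppow P t.+1 u x](Ppow_CK 1 t) [LHS]/=.
by apply: rsum_ext => y; rewrite Ppow1 IH P_sym; ring.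
Qed.

Lemma Ppow_col t u : rsum (fun x => Ppow P t x u) = 1.
Proof. by rewrite -(Ppow_row t u); apply: rsum_ext => x; exact: Ppow_sym. Qed.

Lemma l1_contraction (f : V -> R) t :
  rsum (fun u => Rabs (rsum (fun x => f x * Ppow P t x u)))
  <= rsum (fun x => Rabs (f x)).
Proof.
apply: Rle_trans (_ : rsum (fun u => rsum (fun x => Rabs (f x) * Ppow P t x u)) <= _).
  apply: rsum_le => u; apply: Rle_trans (rsum_abs _) _; apply: rsum_le => x.
  by rewrite Rabs_mult (Rabs_right (Ppow P t x u)); [lra | apply/Rle_ge/Ppow_ge0].
rewrite rsum_exchange; apply: Req_le; apply: rsum_ext => x.
by rewrite rsumZ Ppow_row Rmult_1_r.
Qed.

Lemma l1_contraction_half (f : V -> R) N c :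
  rsum f = 0 ->
  (forall x, rsum (fun u => Rabs (Ppow P N x u - c)) <= / 2) ->
  rsum (fun u => Rabs (rsum (fun x => f x * Ppow P N x u)))
  <= / 2 * rsum (fun x => Rabs (f x)).
Proof.
move=> f_mass0 N_close.
have recenter u : rsum (fun x => f x * Ppow P N x u)
                  = rsum (fun x => f x * (Ppow P N x u - c)).
  have := rsumB (fun x => f x * Ppow P N x u) (fun x => c * f x).
  by rewrite rsumZ f_mass0 Rmult_0_r Rminus_0_r => <-; apply: rsum_ext => x; ring.
apply: Rle_trans (_ : rsum (fun u => rsum (fun x => Rabs (f x) * Rabs (Ppow P N x u - c))) <= _).
  apply: rsum_le => u; rewrite recenter; apply: Rle_trans (rsum_abs _) _.
  by apply: rsum_le => x; rewrite Rabs_mult; lra.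
rewrite rsum_exchange -rsumZ; apply: rsum_le => x.
by rewrite rsumZ; have := N_close x; have := Rabs_pos (f x); nra.
Qed.

Lemma dist_to_const_mono c t j x :
  rsum (fun u => Rabs (Ppow P (t + j) x u - c))
  <= rsum (fun u => Rabs (Ppow P t x u - c)).
Proof.
rewrite (rsum_ext (g := fun u => Rabs (rsum (fun y => (Ppow P t x y - c) * Ppow P j y u)))).
  exact: l1_contraction.
move=> u; congr Rabs.
rewrite (rsum_ext (g := fun y => Ppow P t x y * Ppow P j y u - c * Ppow P j y u)).
  by rewrite rsumB rsumZ Ppow_col Ppow_CK; ring.
by move=> y; ring.
Qed.

Definition Pinc (s : nat) (x y : V) : R :=
  if s is s'.+1 then Ppow P s x y - Ppow P s' x y else Ppow P 0 x y.

Lemma Pinc_step s x w :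
  rsum (fun u => Pinc s x u * P u w)
  = Pinc s.+1 x w + (if s is O then Ppow P 0 x w else 0).
Proof.
case: s => [|s] /=; first lra.
rewrite -rsumB Rplus_0_r; apply: rsum_ext => u; ring.
Qed.

Lemma Pinc_propagate (g : nat -> V -> R) T w :
  rsum (fun u => sumR (fun s => rsum (fun x => g s x * Pinc s x u)) T * P u w)
  = sumR (fun s => rsum (fun x => g s x * Pinc s.+1 x w)) T
    + (if T is O then 0 else g O w).
Proof.
rewrite (rsum_ext (g := fun u => sumR (fun s => rsum (fun x => g s x * Pinc s x u) * P u w) T)).
  2: by move=> u; rewrite sumR_mulr.
rewrite rsum_sumR -sumR_first -sumR_add; apply: sumR_ext => s _.
transitivity (rsum (fun x => g s x * rsum (fun u => Pinc s x u * P u w))).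
  rewrite (rsum_ext (g := fun u => rsum (fun x => g s x * Pinc s x u * P u w))).
    rewrite rsum_exchange; apply: rsum_ext => x.
    by rewrite -rsumZ; apply: rsum_ext => u; ring.
  by move=> u; rewrite Rmult_comm -rsumZ; apply: rsum_ext => x; ring.
rewrite (rsum_ext (g := fun x => g s x * Pinc s.+1 x w
                      + (if s is O then if x == w then g s x else 0 else 0))).
  by rewrite rsumD; case: s => [|s]; [rewrite rsum_delta | rewrite rsum0].
by move=> x; rewrite Pinc_step; case: s => [|s] /=; [case: (x == w)|]; ring.
Qed.

Section Mixing.
Variable N : nat.
Hypothesis N_pos : (0 < N)%N.
Variable c : R.
Hypothesis N_mix : forall x, rsum (fun u => Rabs (Ppow P N x u - c)) <= / 2.
Variable w : V.

Definition step_dist (s : nat) : R :=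
  rsum (fun u => Rabs (Ppow P s.+1 w u - Ppow P s w u)).

Lemma step_dist_ge0 s : 0 <= step_dist s.
Proof. by apply: rsum_ge0 => u; exact: Rabs_pos. Qed.

Lemma step_dist_shift s j :
  step_dist (s + j)
  = rsum (fun u => Rabs (rsum (fun x => (Ppow P s.+1 w x - Ppow P s w x) * Ppow P j x u))).
Proof.
apply: rsum_ext => u; congr Rabs.
by rewrite -addSn !Ppow_CK -rsumB; apply: rsum_ext => x; ring.
Qed.

Lemma step_dist_mono s j : step_dist (s + j) <= step_dist s.
Proof. by rewrite step_dist_shift; exact: l1_contraction. Qed.

Lemma step_dist_half s : step_dist (s + N) <= / 2 * step_dist s.
Proof.
rewrite step_dist_shift; apply: l1_contraction_half N_mix.
by rewrite rsumB !Ppow_row; lra.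
Qed.

Lemma step_dist0 : step_dist 0 <= 2.
Proof.
apply: Rle_trans (_ : rsum (fun u => Ppow P 1 w u + Ppow P 0 w u) <= _).
  apply: rsum_le => u; have := Ppow_ge0 1 w u; have := Ppow_ge0 0 w u.
  by move=> h1 h2; apply: Rabs_le; split; lra.
by rewrite rsumD !Ppow_row; lra.
Qed.

(* Any window of increments starting at j sums to at most 2N times the j-th:
   each block of N steps is at most N times its first term, and these
   first terms decrease geometrically with ratio 1/2. *)
Lemma step_dist_window T j : sumR (fun s => step_dist (j + s)) T <= 2 * INR N * step_dist j.
Proof.
elim: T {-2}T (leqnn T) j => [|T IH] T' HT j.
  rewrite leqn0 in HT; rewrite (eqP HT) /=.
  by have := step_dist_ge0 j; have := pos_INR N; nra.
have first_block : sumR (fun s => step_dist (j + s)) (minn T' N) <= INR N * step_dist j.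
  apply: Rle_trans (sumR_const_le (c := step_dist j) _) _.
    by move=> s _; exact: step_dist_mono.
  have := le_INR _ _ (elimT leP (geq_minr T' N)).
  by have := step_dist_ge0 j; have := pos_INR (minn T' N); nra.
case: (leqP T' N) => HN.
  by move: first_block; rewrite (minn_idPl HN); have := step_dist_ge0 j; have := pos_INR N; nra.
move: first_block; rewrite (minn_idPr (ltnW HN)) => first_block.
rewrite -(subnKC (ltnW HN)) sumR_cat.
have rest : sumR (fun s => step_dist (j + (N + s))) (T' - N) <= 2 * INR N * step_dist (j + N).
  rewrite (sumR_ext (g := fun s => step_dist ((j + N) + s))); last by move=> s _; rewrite addnA.
  by apply: IH; lia.
by have := step_dist_half j; have := step_dist_ge0 j; have := pos_INR N; nra.
Qed.

Lemma increments_l1_sum T :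
  sumR (fun s => rsum (fun x => Rabs (Pinc s x w))) T <= 1 + 4 * INR N.
Proof.
case: T => [|T]; first by have := pos_INR N; rewrite /=; lra.
rewrite sumR_shift.
have -> : rsum (fun x => Rabs (Pinc 0 x w)) = 1.
  rewrite -(rsum_delta w (fun _ => 1)); apply: rsum_ext => x /=.
  by case: (x == w); rewrite ?Rabs_R1 ?Rabs_R0.
rewrite (sumR_ext (g := fun s => step_dist (0 + s))); last first.
  by move=> s _; rewrite add0n; apply: rsum_ext => x; rewrite /Pinc (Ppow_sym s.+1) (Ppow_sym s).
by have := step_dist_window T 0; have := step_dist0; have := pos_INR N; nra.
Qed.

End Mixing.
End MarkovPowers.

Section RouterDynamics.
Variable V : finType.
Variable P : V -> V -> R.
Hypothesis P_row : forall v, rsum (P v) = 1.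
Variable sigma : V -> nat -> V.
Hypothesis sigma_nbr : forall v j, 0 < P v (sigma v j).
Variable chi0 : V -> nat.

(* sent t v = sum_{s<t} chi^(s)_v, the number of tokens routed out of v before step t. *)
Definition sent (t : nat) (v : V) : nat :=
  (iter t (router_step sigma) (fun _ => 0%N, chi0)).1 v.

Lemma router_stepE p : router_step sigma p =
  (fun v => p.1 v + p.2 v,
   fun u => \sum_(v : V) Icount sigma v u (p.1 v) (p.1 v + p.2 v))%N.
Proof. by case: p. Qed.

Lemma sentS t v : sent t.+1 v = (sent t v + chi sigma chi0 t v)%N.
Proof. by rewrite /sent iterS router_stepE. Qed.

Lemma chiS t u : chi sigma chi0 t.+1 u =
  (\sum_(v : V) Icount sigma v u (sent t v) (sent t v + chi sigma chi0 t v))%N.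
Proof. by rewrite /chi iterS router_stepE. Qed.

Lemma Icount_split v u z z' : (z <= z')%N ->
  Icount sigma v u 0 z' = (Icount sigma v u 0 z + Icount sigma v u z z')%N.
Proof. by move=> Hzz'; rewrite /Icount !subn0 -count_cat -iotaD subnKC. Qed.

Lemma Icount_S v u z :
  Icount sigma v u 0 z.+1 = (Icount sigma v u 0 z + (sigma v z == u))%N.
Proof. by rewrite (Icount_split v u (leqnSn z)) /Icount subSnn /=; lia. Qed.

Lemma Icount_sum v z z' : rsum (fun u => INR (Icount sigma v u z z')) = INR (z' - z).
Proof.
rewrite /Icount -{2}(size_iota z (z' - z)).
elim: (iota z (z' - z)) => [|j l IH]; first exact: rsum0.
rewrite (rsum_ext (g := fun u => (if sigma v j == u then 1 else 0)
                                 + INR (count (fun j0 => sigma v j0 == u) l))).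
  rewrite rsumD IH (rsum_delta_r (sigma v j) (fun _ => 1)).
  by rewrite (_ : size (j :: l) = (size l).+1) // S_INR; lra.
by move=> u; rewrite /= plus_INR; case: (sigma v j == u) => /=; lra.
Qed.

Lemma Icount_nonnbr v u z z' : P v u = 0 -> Icount sigma v u z z' = 0%N.
Proof.
move=> Pvu0; rewrite /Icount; elim: (iota z (z' - z)) => [//|j l IH] /=.
rewrite IH addn0; case: eqP => // Eu.
by have := sigma_nbr v j; rewrite Eu Pvu0; lra.
Qed.

Definition discrepancy (v u : V) (z : nat) : R :=
  INR (Icount sigma v u 0 z) - INR z * P v u.

Lemma discrepancy_row_sum v z : rsum (fun u => discrepancy v u z) = 0.
Proof. by rewrite rsumB Icount_sum rsumZ P_row subn0; lra. Qed.

Definition routing_error (t : nat) (u : V) : R :=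
  rsum (fun v => discrepancy v u (sent t v)).

Lemma routing_error0 u : routing_error 0 u = 0.
Proof. by rewrite -(rsum0 V); apply: rsum_ext => v; rewrite /discrepancy /Icount /=; lra. Qed.

Lemma mu_S T w : mu P chi0 T.+1 w = rsum (fun u => mu P chi0 T u * P u w).
Proof.
transitivity (rsum (fun v => rsum (fun u => INR (chi0 v) * Ppow P T v u * P u w))).
  by apply: rsum_ext => v; rewrite /= -rsumZ; apply: rsum_ext => u; ring.
rewrite rsum_exchange; apply: rsum_ext => u.
by rewrite Rmult_comm -rsumZ; apply: rsum_ext => v; ring.
Qed.

Lemma error_step T w :
  INR (chi sigma chi0 T.+1 w) - mu P chi0 T.+1 w
  = routing_error T.+1 w - routing_error T w
    + rsum (fun u => (INR (chi sigma chi0 T u) - mu P chi0 T u) * P u w).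
Proof.
rewrite chiS rsum_INR mu_S /routing_error -!rsumB -rsumD.
apply: rsum_ext => v; rewrite /discrepancy sentS.
rewrite (Icount_split v w (leq_addr (chi sigma chi0 T v) (sent T v))) !plus_INR.
ring.
Qed.

Theorem error_formula T w :
  INR (chi sigma chi0 T w) - mu P chi0 T w
  = sumR (fun s => rsum (fun x => routing_error (T - s) x * Pinc P s x w)) T.
Proof.
elim: T w => [|T IH] w.
  rewrite /mu /= -[INR _](rsum_delta w (fun v => INR (chi0 v))).
  by apply: Rminus_diag_eq; apply: rsum_ext => v; case: (v == w) => /=; ring.
rewrite error_step (rsum_ext (g := fun u : V => sumR (fun s : nat =>
    rsum (fun x : V => routing_error (T - s) x * Pinc P s x u)) T * P u w)); last first.
  by move=> u; rewrite IH.
rewrite (Pinc_propagate P (fun s x => routing_error (T - s) x)) sumR_shift subn0.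
have -> : rsum (fun x => routing_error T.+1 x * Pinc P 0 x w) = routing_error T.+1 w.
  rewrite -(rsum_delta w (routing_error T.+1)).
  by apply: rsum_ext => x /=; case: (x == w); ring.
rewrite (sumR_ext (g := fun s => rsum (fun x => routing_error (T - s) x * Pinc P s.+1 x w))).
  by case: T {IH} => [|T]; rewrite ?routing_error0; ring.
by move=> s _; rewrite subSS.
Qed.

End RouterDynamics.

Section ErrorBound.
Variable V : finType.
Variable P : V -> V -> R.
Hypothesis P_ge0 : forall v u, 0 <= P v u.
Hypothesis P_row : forall v, rsum (P v) = 1.
Hypothesis P_sym : forall v u, P v u = P u v.
Variable sigma : V -> nat -> V.
Hypothesis sigma_nbr : forall v j, 0 < P v (sigma v j).
Variable chi0 : V -> nat.
Variable E : V -> V -> bool.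
Hypothesis E_sym : forall v u, E v u = E u v.
Variable deg : R.
Hypothesis E_deg : forall v, rsum (fun u => if E v u then 1 else 0) <= deg.
Hypothesis P_off_E : forall v u, u != v -> ~~ E v u -> P v u = 0.
Hypothesis discrepancy_E : forall v u z, E v u -> Rabs (discrepancy P sigma v u z) <= 1.

Local Notation H := (routing_error P sigma chi0).
Local Notation D t v u := (discrepancy P sigma v u (sent sigma chi0 t v)).

(* Since each row of discrepancies sums to 0, testing H_t against c only sees
   the differences c x - c v across edges v -> x. *)
Lemma routing_error_recenter t (c : V -> R) :
  rsum (fun x => H t x * c x) = rsum (fun v => rsum (fun x => D t v x * (c x - c v))).
Proof.
rewrite (rsum_ext (g := fun x => rsum (fun v => D t v x * c x))); last first.
  by move=> x; rewrite Rmult_comm -rsumZ; apply: rsum_ext => v; ring.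
rewrite rsum_exchange; apply: rsum_ext => v.
rewrite (rsum_ext (f := fun x => D t v x * (c x - c v))
                  (g := fun x => D t v x * c x - c v * D t v x)); last by move=> x; ring.
by rewrite rsumB rsumZ discrepancy_row_sum //; ring.
Qed.

Lemma recentered_term_bound t v x (c : V -> R) :
  Rabs (D t v x * (c x - c v)) <= (if E v x then 1 else 0) * (Rabs (c x) + Rabs (c v)).
Proof.
rewrite Rabs_mult.
have [->|x_neq_v] := eqVneq x v.
  by rewrite Rminus_diag_eq // Rabs_R0 Rmult_0_r; case: (E v v); have := Rabs_pos (c v); lra.
have c_diff : Rabs (c x - c v) <= Rabs (c x) + Rabs (c v).
  by apply: Rle_trans (Rabs_triang _ _) _; rewrite Rabs_Ropp; lra.
case Evx: (E v x).
  have := discrepancy_E (sent sigma chi0 t v) Evx.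
  by have := Rabs_pos (D t v x); have := Rabs_pos (c x - c v); nra.
have Pvx0 := P_off_E x_neq_v (negbT Evx).
by rewrite /discrepancy (Icount_nonnbr sigma_nbr) // Pvx0 Rmult_0_r Rminus_0_r Rabs_R0; lra.
Qed.

Lemma weighted_error_bound t (c : V -> R) :
  Rabs (rsum (fun x => H t x * c x)) <= 2 * deg * rsum (fun x => Rabs (c x)).
Proof.
rewrite routing_error_recenter; apply: Rle_trans (rsum_abs _) _.
apply: Rle_trans (_ : rsum (fun v => rsum (fun x =>
    (if E v x then 1 else 0) * (Rabs (c x) + Rabs (c v)))) <= _).
  apply: rsum_le => v; apply: Rle_trans (rsum_abs _) _.
  by apply: rsum_le => x; exact: recentered_term_bound.
rewrite (rsum_ext (g := fun v => rsum (fun x => (if E v x then 1 else 0) * Rabs (c x))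
                         + Rabs (c v) * rsum (fun x => if E v x then 1 else 0))); last first.
  by move=> v; rewrite -rsumZ -rsumD; apply: rsum_ext => x; ring.
rewrite rsumD rsum_exchange.
have into_x : rsum (fun x => rsum (fun v => (if E v x then 1 else 0) * Rabs (c x)))
              <= deg * rsum (fun x => Rabs (c x)).
  rewrite -rsumZ; apply: rsum_le => x.
  rewrite (rsum_ext (g := fun v => Rabs (c x) * (if E x v then 1 else 0))).
    by rewrite rsumZ; have := E_deg x; have := Rabs_pos (c x); nra.
  by move=> v; rewrite E_sym; ring.
have out_of_v : rsum (fun v => Rabs (c v) * rsum (fun x => if E v x then 1 else 0))
                <= deg * rsum (fun x => Rabs (c x)).
  by rewrite -rsumZ; apply: rsum_le => v; have := E_deg v; have := Rabs_pos (c v); nra.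
lra.
Qed.

Theorem router_error_bound N (cst : R) T w :
  (0 < N)%N -> (forall x, rsum (fun u => Rabs (Ppow P N x u - cst)) <= / 2) -> 0 <= deg ->
  Rabs (INR (chi sigma chi0 T w) - mu P chi0 T w) <= 2 * deg * (1 + 4 * INR N).
Proof.
move=> N_pos N_mix deg_ge0.
rewrite error_formula; apply: Rle_trans (sumR_abs _ _) _.
apply: Rle_trans (_ : sumR (fun s => rsum (fun x => Rabs (Pinc P s x w)) * (2 * deg)) T <= _).
  by apply: sumR_le => s _; rewrite Rmult_comm; exact: weighted_error_bound.
rewrite -sumR_mulr.
have := increments_l1_sum P_ge0 P_row P_sym N_pos N_mix w T.
have : 0 <= sumR (fun s => rsum (fun x => Rabs (Pinc P s x w))) T.
  by apply: sumR_ge0 => s _; apply: rsum_ge0 => x; exact: Rabs_pos.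
nra.
Qed.

End ErrorBound.

Lemma div_le_iff (a p b : R) : 0 < p -> (a / p <= b <-> a <= b * p).
Proof.
move=> p_pos; have a_eq : a / p * p = a by field; lra.
split=> H; first by rewrite -a_eq; apply: Rmult_le_compat_r; lra.
by apply: (Rmult_le_reg_r p) => //; rewrite a_eq.
Qed.

Lemma le_div_iff (r a p : R) : 0 < p -> (r <= a / p <-> r * p <= a).
Proof.
move=> p_pos; have a_eq : a / p * p = a by field; lra.
split=> H; first by rewrite -a_eq; apply: Rmult_le_compat_r; lra.
by apply: (Rmult_le_reg_r p) => //; rewrite a_eq.
Qed.

Section DueFirstRouter.
Variable V : finType.
Variable P : V -> V -> R.
Hypothesis P_ge0 : forall v u, 0 <= P v u.
Hypothesis P_row : forall v, rsum (P v) = 1.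
Variable sigma : V -> nat -> V.
Variable v : V.

Local Notation I u z := (Icount sigma v u 0 z).

Hypothesis due_first : forall z m u, (z < m)%N ->
  INR (I u z) + 1 <= INR m * P v u ->
  INR m * P v (sigma v z) < INR (I (sigma v z) z) + 1 ->
  INR (z + 1) * P v u <= INR (I u z).

Definition deficit (k : V -> nat) (z : nat) : nat := (\sum_(u : V) (k u - I u z))%N.

Definition feasible (k : V -> nat) (m : nat) : Prop := forall u, INR (k u) <= INR m * P v u.

Lemma deficit_init k m : feasible k m -> (deficit k 0 <= m)%N.
Proof.
move=> k_feas; apply/leP/INR_le.
rewrite /deficit (eq_bigr k) ?rsum_INR; last by move=> u _; rewrite subn0.
by apply: Rle_trans (rsum_le k_feas) _; rewrite rsumZ P_row; lra.
Qed.

Lemma deficit_S_owed k z :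
  (I (sigma v z) z < k (sigma v z))%N -> deficit k z = (deficit k z.+1).+1.
Proof.
set w := sigma v z => owed.
rewrite /deficit (bigD1 w) // [in RHS](bigD1 w) //= Icount_S eqxx.
rewrite [in RHS](eq_bigr (fun u => k u - I u z))%N; first by lia.
by move=> u u_neq_w; rewrite Icount_S eq_sym (negbTE u_neq_w) addn0.
Qed.

Lemma deficit_S_not_due k z m :
  (z < m)%N -> feasible k m ->
  INR m * P v (sigma v z) < INR (I (sigma v z) z) + 1 ->
  (deficit k z.+1 <= m - z.+1)%N.
Proof.
move=> z_lt_m k_feas not_due; apply/leP/INR_le.
rewrite /deficit rsum_INR minus_INR; last exact/leP.
apply: Rle_trans (_ : rsum (fun u => (INR m - INR z.+1) * P v u) <= _); last first.
  by rewrite rsumZ P_row; lra.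
apply: rsum_le => u.
have zm : INR z.+1 <= INR m by apply/le_INR/leP.
have [k_le|I_lt] := leqP (k u) (I u z.+1).
  by rewrite (eqP (_ : k u - I u z.+1 == 0)%N) ?subn_eq0 // [INR 0]/=; have := P_ge0 v u; nra.
rewrite minus_INR; last exact/leP/ltnW.
have I_mono : (I u z <= I u z.+1)%N by rewrite Icount_S leq_addr.
have u_due : INR (I u z) + 1 <= INR (k u).
  by rewrite -S_INR; apply/le_INR/leP; exact: leq_ltn_trans I_mono I_lt.
have := due_first z_lt_m (Rle_trans _ _ _ u_due (k_feas u)) not_due.
have := le_INR _ _ (elimT leP I_mono); have := k_feas u.
by rewrite -addn1 plus_INR /= in zm *; lra.
Qed.

Lemma deficit_bound z : forall m k, (z <= m)%N -> feasible k m -> (deficit k z <= m - z)%N.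
Proof.
elim: z => [|z IH] m k z_le_m k_feas; first by rewrite subn0; exact: deficit_init.
set w := sigma v z.
have owed_case k' : feasible k' m -> (I w z < k' w)%N -> (deficit k' z.+1 <= m - z.+1)%N.
  by move=> k'_feas owed; have := IH m k' (ltnW z_le_m) k'_feas; rewrite deficit_S_owed //; lia.
have [owed|served] := ltnP (I w z) (k w); first exact: owed_case.
have [due|not_due] := Rle_lt_dec (INR (I w z) + 1) (INR m * P v w); last first.
  exact: deficit_S_not_due.
(* Raising the demand at w to I w z + 1 keeps it feasible and does not change
   the deficit after step z. *)
pose k' u := if u == w then (I w z).+1 else k u.
have k'_feas : feasible k' m.
  by move=> u; rewrite /k'; case: eqP => [->|_]; [rewrite S_INR | apply: k_feas].
have <- : deficit k' z.+1 = deficit k z.+1.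
  apply: eq_bigr => u _; rewrite /k'; case: eqP => [->|//].
  by rewrite Icount_S eqxx; lia.
by apply: owed_case => //; rewrite /k' eqxx.
Qed.

Lemma discrepancy_lower u z : -1 < discrepancy P sigma v u z.
Proof.
rewrite /discrepancy.
have [//|behind] := Rlt_le_dec (-1) (INR (I u z) - INR z * P v u).
pose k x := if x == u then (I u z).+1 else 0%N.
have k_feas : feasible k z.
  move=> x; rewrite /k; case: eqP => [->|_]; first by rewrite S_INR; lra.
  by have := P_ge0 v x; have := pos_INR z; simpl INR; nra.
have := deficit_bound (leqnn z) k_feas; rewrite subnn leqn0 /deficit => /eqP.
by rewrite (bigD1 u) //= /k eqxx; lia.
Qed.

End DueFirstRouter.

Section SRTAndBilliard.
Variable V : finType.
Variable P : V -> V -> R.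
Hypothesis P_ge0 : forall v u, 0 <= P v u.
Hypothesis P_row : forall v, rsum (P v) = 1.
Variable sigma : V -> nat -> V.

Lemma due_edge_pos (m : nat) (a p : R) : 0 <= a -> a + 1 <= INR m * p -> 0 <= p -> 0 < p.
Proof. by move=> a_ge0 due p_ge0; case: (Rle_lt_or_eq_dec 0 p p_ge0) => // p0; rewrite -p0 in due; lra. Qed.

Section SRT.
Hypothesis srt : is_SRT_router P sigma.

Lemma srt_nbr v j : 0 < P v (sigma v j).
Proof. by case: (srt v j) => [[]]. Qed.

Lemma srt_due_first v z m u : (z < m)%N ->
  INR (Icount sigma v u 0 z) + 1 <= INR m * P v u ->
  INR m * P v (sigma v z) < INR (Icount sigma v (sigma v z) 0 z) + 1 ->
  INR (z + 1) * P v u <= INR (Icount sigma v u 0 z).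
Proof.
move=> _ u_due not_due.
have [//|u_behind] := Rle_lt_dec (INR (z + 1) * P v u) (INR (Icount sigma v u 0 z)).
have Pvu_pos : 0 < P v u by apply: (due_edge_pos (pos_INR _) u_due (P_ge0 v u)).
have u_in_T : in_T P sigma v z u by split => //; lra.
case: (srt v z) => [[sigma_pos _] sigma_min].
move/(div_le_iff _ _ Pvu_pos): u_due => u_due.
have sigma_due := Rle_trans _ _ _ (sigma_min u u_in_T) u_due.
by move/(div_le_iff _ _ sigma_pos): sigma_due; lra.
Qed.

(* The SRT router never sends a token that would put an edge a full token ahead. *)
Lemma srt_upper v u z : discrepancy P sigma v u z < 1.
Proof.
rewrite /discrepancy; elim: z => [|z IH]; first by rewrite /Icount /=; lra.
rewrite Icount_S plus_INR S_INR; case: eqP => [<-|_] /=.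
  by case: (srt v z) => [[_ in_T] _]; rewrite addn1 S_INR in in_T; lra.
by have := P_ge0 v u; lra.
Qed.

End SRT.

Section Billiard.
Hypothesis billiard : is_billiard_router P sigma.

Lemma billiard_nbr v j : 0 < P v (sigma v j).
Proof. by case: (billiard v j). Qed.

(* For the billiard router the premises of due_first are contradictory. *)
Lemma billiard_due_first v z m u : (z < m)%N ->
  INR (Icount sigma v u 0 z) + 1 <= INR m * P v u ->
  INR m * P v (sigma v z) < INR (Icount sigma v (sigma v z) 0 z) + 1 ->
  INR (z + 1) * P v u <= INR (Icount sigma v u 0 z).
Proof.
move=> _ u_due not_due; exfalso.
have Pvu_pos : 0 < P v u by apply: (due_edge_pos (pos_INR _) u_due (P_ge0 v u)).
case: (billiard v z) => [sigma_pos sigma_min].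
move/(div_le_iff _ _ Pvu_pos): u_due => u_due.
have sigma_due := Rle_trans _ _ _ (sigma_min u Pvu_pos) u_due.
by move/(div_le_iff _ _ sigma_pos): sigma_due; lra.
Qed.

Definition out_degree (v : V) : R := rsum (fun x => if Rlt_dec 0 (P v x) then 1 else 0).

Lemma out_degree_ge1 v u : 0 < P v u -> 1 <= out_degree v.
Proof.
move=> Pvu_pos.
have := @rsum_ge_term V (fun x => if Rlt_dec 0 (P v x) then 1 else 0) u.
have -> : (if Rlt_dec 0 (P v u) then 1 else 0) = 1 by destruct (Rlt_dec 0 (P v u)).
by apply=> x; destruct (Rlt_dec 0 (P v x)); simpl; lra.
Qed.

(* When the billiard router serves u at time z, the due time (I_u + 1)/P(v,u)
   of u is at most z + |N(v)|: all edges together received only z tokens. *)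
Lemma billiard_due_time v z :
  (INR (Icount sigma v (sigma v z) 0 z) + 1) / P v (sigma v z) <= INR z + out_degree v.
Proof.
case: (billiard v z) => [sigma_pos sigma_min].
set r := (INR (Icount sigma v (sigma v z) 0 z) + 1) / P v (sigma v z).
have share x : P v x * r <= INR (Icount sigma v x 0 z) + (if Rlt_dec 0 (P v x) then 1 else 0).
  destruct (Rlt_dec 0 (P v x)) as [Pvx_pos|Pvx_npos]; simpl.
    by move/(le_div_iff _ _ Pvx_pos): (sigma_min x Pvx_pos); rewrite -/r; lra.
  have -> : P v x = 0 by have := P_ge0 v x; lra.
  by have := pos_INR (Icount sigma v x 0 z); lra.
have := rsum_le share; rewrite rsumD Icount_sum subn0.
by rewrite (rsum_ext (g := fun x => r * P v x)) ?rsumZ ?P_row /out_degree; [lra | move=> x; ring].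
Qed.

Lemma billiard_upper v u z :
  discrepancy P sigma v u z <= (out_degree v - 1) * P v u.
Proof.
rewrite /discrepancy; elim: z => [|z IH].
  rewrite /Icount /=; have [Pvu_pos|<-] := Rle_lt_or_eq_dec 0 _ (P_ge0 v u); last lra.
  by have := out_degree_ge1 Pvu_pos; nra.
rewrite Icount_S plus_INR S_INR; case: eqP => [served|_] /=; last by have := P_ge0 v u; lra.
have := billiard_due_time v z; rewrite served => due.
case: (billiard v z) => [sigma_pos _]; rewrite served in sigma_pos.
move/(div_le_iff _ _ sigma_pos): due; lra.
Qed.

End Billiard.
End SRTAndBilliard.

Lemma l1dist_sym n (x y : {ffun 'I_n -> bool}) : l1dist x y = l1dist y x.
Proof. by apply: eq_card => i; rewrite !inE eq_sym. Qed.

Lemma l1dist_self n (x : {ffun 'I_n -> bool}) : l1dist x x = 0%N.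
Proof. by apply: eq_card0 => i; rewrite !inE eqxx. Qed.

Lemma l1dist_le n (x y : {ffun 'I_n -> bool}) : (l1dist x y <= n)%N.
Proof. by apply: leq_trans (max_card _) _; rewrite card_ord. Qed.

Lemma l1dist1P n (x y : {ffun 'I_n -> bool}) : l1dist x y = 1%N ->
  exists i, forall j, (x j != y j) = (j == i).
Proof.
move=> /eqP /cards1P [i Hi]; exists i => j.
by have := congr1 (fun A : {set 'I_n} => j \in A) Hi; rewrite !inE.
Qed.

(* A knapsack solution has at most n neighbours: a neighbour is determined by
   the coordinate in which it differs. *)
Lemma nbr_Kna_card_le n a b (x : Omega n a b) : (nbr_Kna_card x <= n)%N.
Proof.
case: n a b x => [|n] a b x.
  rewrite leqn0 cards_eq0; apply/eqP/setP => y; rewrite !inE.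
  by rewrite /l1dist (eq_card0 (A := [set i : 'I_0 | _])) // => -[].
pose flip (y : Omega n.+1 a b) := odflt ord0 [pick i | val x i != val y i].
have flipP y : l1dist (val x) (val y) == 1%N -> forall j, (val x j != val y j) = (j == flip y).
  move=> /eqP /l1dist1P [i Hi] j; rewrite /flip; case: pickP => [k|none].
    by rewrite Hi => /eqP ->; rewrite Hi.
  by have := none i; rewrite Hi eqxx.
apply: (@leq_trans #|'I_n.+1|); last by rewrite card_ord.
apply: (@leq_card_in _ _ flip) => y1 y2.
rewrite !inE => /flipP h1 /flipP h2 flip12; apply/val_inj/ffunP => j.
move: (h1 j) (h2 j); rewrite -flip12.
by case: (j == flip y1); case: (val x j); case: (val y1 j); case: (val y2 j).
Qed.

Section Knapsack.
Variables (n : nat) (a : 'I_n -> nat) (b : nat).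
Local Notation Om := (Omega n a b).
Local Notation PK := (@P_Kna n a b).
Local Notation K x := (INR (nbr_Kna_card x)).
Implicit Types x y v u : Om.

Definition EK x y : bool := l1dist (val x) (val y) == 1%N.

Lemma EK_sym x y : EK x y = EK y x.
Proof. by rewrite /EK l1dist_sym. Qed.

Lemma EK_n_ge1 x y : EK x y -> 1 <= INR n.
Proof.
move=> /eqP Exy; have := l1dist_le (val x) (val y); rewrite Exy => n_ge1.
by have := le_INR _ _ (elimT leP n_ge1).
Qed.

Lemma EK_indicator x c : rsum (fun y => if EK x y then c else 0) = K x * c.
Proof. by rewrite rsum_indicator; congr (INR _ * c); apply: eq_card => y; rewrite inE. Qed.

Lemma K_le x : K x <= INR n.
Proof. by apply/le_INR/leP; exact: nbr_Kna_card_le. Qed.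

Lemma K_ratio_le_half x : K x / (2 * INR n) <= / 2.
Proof.
have [n0|n_pos] := posnP n.
  have INR_n0 : INR n = 0 by rewrite n0.
  have K0 : K x = 0 by have := K_le x; have := pos_INR (nbr_Kna_card x); lra.
  by rewrite K0 /Rdiv Rmult_0_l; lra.
have n_pos' : 0 < INR n by apply/lt_0_INR/ltP.
by apply/div_le_iff; [lra | have := K_le x; lra].
Qed.

Lemma PK_split x y : PK x y =
  (if EK x y then / (2 * INR n) else 0) + (if y == x then 1 - K x / (2 * INR n) else 0).
Proof.
rewrite /P_Kna -/(EK x y); case Exy: (EK x y).
  by case: eqP Exy => [->|_]; [rewrite /EK l1dist_self | lra].
by rewrite eq_sym; case: eqP; lra.
Qed.

Lemma PK_ge0 x y : 0 <= PK x y.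
Proof.
rewrite PK_split; have := K_ratio_le_half x.
case Exy: (EK x y); last by case: eqP; lra.
have := EK_n_ge1 Exy => n_ge1.
by have := Rinv_0_lt_compat (2 * INR n) ltac:(lra); case: eqP; lra.
Qed.

Lemma PK_row x : rsum (PK x) = 1.
Proof.
rewrite (rsum_ext (PK_split x)) rsumD EK_indicator rsum_delta /Rdiv; ring.
Qed.

Lemma PK_sym x y : PK x y = PK y x.
Proof.
rewrite /P_Kna l1dist_sym; case: (_ == 1%N) => //.
by case: (eqVneq x y) => [->|x_neq_y]; rewrite ?eqxx // eq_sym (negbTE x_neq_y).
Qed.

Lemma PK_off_EK x y : y != x -> ~~ EK x y -> PK x y = 0.
Proof. by move=> y_neq_x nEK; rewrite PK_split (negbTE nEK) (negbTE y_neq_x); ring. Qed.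

Lemma EK_deg x : rsum (fun y => if EK x y then 1 else 0) <= INR n.
Proof. by rewrite EK_indicator Rmult_1_r; exact: K_le. Qed.

Lemma out_degree_PK x : out_degree PK x <= 1 + K x.
Proof.
apply: Rle_trans (_ : _ <= rsum (fun y => (if y == x then 1 else 0) + (if EK x y then 1 else 0))) _.
  apply: rsum_le => y; case: (eqVneq y x) => [->|y_neq_x].
    by destruct (Rlt_dec 0 (PK x x)); case: (EK x x); simpl; lra.
  case Exy: (EK x y); first by destruct (Rlt_dec 0 (PK x y)); simpl; lra.
  by rewrite PK_off_EK ?Exy //; destruct (Rlt_dec 0 0); simpl; lra.
by rewrite rsumD (rsum_delta x (fun _ => 1)) EK_indicator; lra.
Qed.

(* Along an edge, the billiard slack (|N(v)| - 1) P(v,u) <= n / (2n) is at most 1. *)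
Lemma billiard_slack_le1 v u : EK v u -> (out_degree PK v - 1) * PK v u <= 1.
Proof.
move=> Evu; rewrite PK_split Evu; case: eqP => [u_eq_v|_].
  by move: Evu; rewrite u_eq_v /EK l1dist_self.
have n_ge1 := EK_n_ge1 Evu.
have := out_degree_PK v; have := K_le v; have := K_ratio_le_half v.
have := Rinv_0_lt_compat (2 * INR n) ltac:(lra); rewrite /Rdiv; nra.
Qed.

Lemma knapsack_discrepancy_bound (sigma : Om -> nat -> Om) :
  is_SRT_router PK sigma \/ is_billiard_router PK sigma ->
  forall v u z, EK v u -> Rabs (discrepancy PK sigma v u z) <= 1.
Proof.
move=> router v u z Evu; apply: Rabs_le.
case: router => [srt|billiard].
  have := discrepancy_lower PK_ge0 PK_row (srt_due_first PK_ge0 srt (v := v)) u z.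
  by have := srt_upper PK_ge0 srt v u z; lra.
have := discrepancy_lower PK_ge0 PK_row (billiard_due_first PK_ge0 billiard (v := v)) u z.
have := billiard_upper PK_ge0 PK_row billiard v u z.
by have := billiard_slack_le1 Evu; lra.
Qed.


Lemma knapsack_router_error N (sigma : Om -> nat -> Om) (chi0 : Om -> nat) T w :
  is_SRT_router PK sigma \/ is_billiard_router PK sigma ->
  (0 < N)%N -> (forall x, rsum (fun u => Rabs (Ppow PK N x u - / INR #|Om|)) <= / 2) ->
  Rabs (INR (chi sigma chi0 T w) - mu PK chi0 T w) <= 2 * INR n * (1 + 4 * INR N).
Proof.
move=> router N_pos N_mix.
have sigma_nbr v j : 0 < PK v (sigma v j).
  by case: router => [srt|billiard]; [exact: srt_nbr | exact: billiard_nbr].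
exact: (router_error_bound PK_ge0 PK_row PK_sym sigma_nbr chi0 EK_sym EK_deg
          PK_off_EK (knapsack_discrepancy_bound router) T w N_pos N_mix (pos_INR n)).
Qed.

End Knapsack.

Lemma mixing_steps (V : finType) (P : V -> V -> R) (c B : R) (w : V) :
  (forall v u, 0 <= P v u) -> (forall v, rsum (P v) = 1) -> (forall v u, P v u = P u v) ->
  mixing_time_le P (fun _ => c) (/ 4) B ->
  exists N : nat, [/\ (0 < N)%N, INR N <= B + 2 &
    forall x, rsum (fun u => Rabs (Ppow P N x u - c)) <= / 2].
Proof.
move=> P_ge0 P_row P_sym mix.
have B_ge0 : 0 <= B by case: (mix w) => t [Ht _]; have := pos_INR t; lra.
have [up_gt up_le] := archimed B.
have up_ge0 : (0 <= up B)%Z by apply: le_IZR; lra.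
pose N0 := Z.to_nat (up B).
have N0_eq : INR N0 = IZR (up B) by rewrite /N0 INR_IZR_INZ Znat.Z2Nat.id.
exists (maxn N0 1); split; first by rewrite leq_max orbT.
  have le_N0_1 : (maxn N0 1 <= N0 + 1)%N by lia.
  by have := le_INR _ _ (elimT leP le_N0_1); rewrite plus_INR N0_eq /=; lra.
move=> x; case: (mix x) => t [t_le_B t_mix].
have t_le_N : (t <= maxn N0 1)%N.
  have : (t < N0)%N by apply/ltP/INR_lt; lra.
  by lia.
rewrite -(subnKC t_le_N); apply: Rle_trans (dist_to_const_mono P_ge0 P_row P_sym _ _ _ _) _.
by move: t_mix; rewrite /dTV; lra.
Qed.

Lemma error_budget (n N : nat) (C alpha : R) :
  0 < alpha -> INR N <= C * Rpower (INR n) (9 / 2 + alpha) + 2 ->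
  2 * INR n * (1 + 4 * INR N) <= (18 + 8 * Rabs C) * Rpower (INR n) (11 / 2 + alpha).
Proof.
move=> alpha_pos N_le.
have C'_ge0 : 0 <= 18 + 8 * Rabs C by have := Rabs_pos C; lra.
have [n0|n_pos] := posnP n.
  rewrite n0 /= Rmult_0_r Rmult_0_l.
  by apply: Rmult_le_pos => //; rewrite /Rpower; apply/Rlt_le/exp_pos.
have n_ge1 : 1 <= INR n by have := le_INR 1 n (elimT leP n_pos).
set R9 := Rpower (INR n) (9 / 2 + alpha) in N_le *.
have R9_ge1 : 1 <= R9.
  by rewrite /R9 -(Rpower_O (INR n)); [apply: Rle_Rpower => //; lra | lra].
have -> : Rpower (INR n) (11 / 2 + alpha) = INR n * R9.
  rewrite /R9 (_ : 11 / 2 + alpha = 1 + (9 / 2 + alpha)); last by field.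
  by rewrite Rpower_plus Rpower_1 //; lra.
have C_abs : C * R9 <= Rabs C * R9 by apply: Rmult_le_compat_r; [lra | exact: Rle_abs].
have N_bound : 1 + 4 * INR N <= (9 + 4 * Rabs C) * R9 by have := Rabs_pos C; nra.
by have := Rmult_le_compat_l (2 * INR n) _ _ ltac:(lra) N_bound; lra.
Qed.

Unset Implicit Arguments.

Theorem theorem6p2 :
  (* Morris--Sinclair mixing bound (assumption) *)
  (forall alpha : R, (0 < alpha) ->
     exists C : R,
       forall (n : nat) (a : 'I_n -> nat) (b : nat),
         (forall i, 0 < a i)%N -> (0 < b)%N ->
         mixing_time_le (@P_Kna n a b) (@unif_Kna n a b) (/ 4)
           (C * Rpower (INR n) (9 / 2 + alpha))) ->
  forall alpha : R, (0 < alpha) ->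
    exists C' : R,
      forall (n : nat) (a : 'I_n -> nat) (b : nat),
        (forall i, 0 < a i)%N -> (0 < b)%N ->
        forall (sigma : Omega n a b -> nat -> Omega n a b)
               (chi0 : Omega n a b -> nat),
          (is_SRT_router (@P_Kna n a b) sigma \/ is_billiard_router (@P_Kna n a b) sigma) ->
          forall (w : Omega n a b) (T : nat),
            (Rabs (INR (chi sigma chi0 T w) - mu (@P_Kna n a b) chi0 T w)
               <= C' * Rpower (INR n) (11 / 2 + alpha)).
Proof.
move=> morris_sinclair alpha alpha_pos.
have [C mixing_bound] := morris_sinclair alpha alpha_pos.
exists (18 + 8 * Rabs C) => n a b a_pos b_pos sigma chi0 router w T.
have [N [N_pos N_le N_mix]] := mixing_steps w (@PK_ge0 n a b) (@PK_row n a b)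
  (@PK_sym n a b) (mixing_bound n a b a_pos b_pos).
apply: Rle_trans (knapsack_router_error chi0 T w router N_pos N_mix) _.
exact: error_budget.
Qed.
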